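(* Let $G$ be an elementary abelian $2$-group and let $T\subseteq G$ be a generating subset of $G$ with $0\in T$. Let $\mathcal{U}$ be the group with presentation $$\mathcal{U}=\big\langle (t^{\mathcal U})_{t\in T}\;\big|\;(t^{\mathcal U})^2=1,\ t^{\mathcal U}s^{\mathcal U}(t^{\mathcal U})^{-1}=(2t-s)^{\mathcal U}\text{ for all } s,t\in T\big\rangle,$$ and let $\mathcal{W}$ be the subgroup generated by $\{(0,t,-1)\mid t\in T\}$ of the group $(G\wedge G)\times G\times\{1,-1\}$ with multiplication $(l,g,v)(l',g',v')=(l+l'+g\wedge(vg'),\,g+vg',\,vv')$. Let $\mathcal U\to\mathcal W$ be the group homomorphism determined by $t^{\mathcal U}\mapsto(0,t,-1)$ for $t\in T$. Then this homomorphism is injective if and only if the set $T\setminus\{0\}$ is $2$-independent in $G$.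
   Context: Since $2s=0$ in $G$, the relation reads $t^{\mathcal U}s^{\mathcal U}(t^{\mathcal U})^{-1}=s^{\mathcal U}$. A subset $M$ of an abelian group $G$ (here an $\mathbb{F}_2$-vector space) is called 2-dependent if the elements of the set $\{g\otimes g\mid g\in M\}$ are linearly dependent in $G\otimes G$, and 2-independent if it is not 2-dependent. The homomorphism $\mathcal U\to\mathcal W$ exists since the elements $(0,t,-1)$ satisfy the defining relations of $\mathcal U$. *)

From HB Require Import structures.
From mathcomp Require Import all_boot all_algebra.
From mathcomp Require Import monoid.
Set Implicit Arguments.
Unset Strict Implicit.
Unset Printing Implicit Defensive.
Import GRing.Theory.
Local Open Scope ring_scope.

Definition biadditive (G A : zmodType) (f : G -> G -> A) : Prop :=
  (forall x y z, f (x + y) z = f x z + f y z) /\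
  (forall x y z, f x (y + z) = f x y + f x z).

Definition additive_fun (A B : zmodType) (h : A -> B) : Prop :=
  forall u v, h (u + v) = h u + h v.

Definition is_tensor_square (G TT : zmodType) (tens : G -> G -> TT) : Prop :=
  biadditive tens /\
  forall (A : zmodType) (f : G -> G -> A), biadditive f ->
    exists h : TT -> A, additive_fun h /\ (forall x y, h (tens x y) = f x y) /\
      forall h' : TT -> A, additive_fun h' ->
        (forall x y, h' (tens x y) = f x y) -> forall u, h' u = h u.

Definition is_exterior_square (G E : zmodType) (wedge : G -> G -> E) : Prop :=
  (biadditive wedge /\ forall x, wedge x x = 0) /\
  forall (A : zmodType) (f : G -> G -> A), biadditive f -> (forall x, f x x = 0) ->
    exists h : E -> A, additive_fun h /\ (forall x y, h (wedge x y) = f x y) /\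
      forall h' : E -> A, additive_fun h' ->
        (forall x y, h' (wedge x y) = f x y) -> forall u, h' u = h u.

(* T generates G as an abelian group (for an elementary abelian 2-group,
   the subgroup generated by T is the set of finite sums of elements of T). *)
Definition generates (G : zmodType) (T : G -> Prop) : Prop :=
  forall g : G, exists s : seq G, (forall x, x \in s -> T x) /\ g = \sum_(x <- s) x.

Definition U_relations (G : zmodType) (T : G -> Prop) (H : groupType) (f : G -> H)
  : Prop :=
  (forall t, T t -> (f t ^+ 2 = 1)%g) /\
  (forall t s, T t -> T s -> (f t * f s * (f t)^-1 = f (t *+ 2 - s))%g).

Definition presents (G : zmodType) (T : G -> Prop) (U : groupType) (iota : G -> U)
  : Prop :=
  U_relations T iota /\
  (forall u : U, exists w : seq (G * bool), (forall p, p \in w -> T p.1) /\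
     u = (\prod_(p <- w) (if p.2 then (iota p.1)^-1 else iota p.1))%g) /\
  (forall (H : groupType) (f : G -> H), U_relations T f ->
     exists psi : U -> H, (forall x y, psi (x * y)%g = (psi x * psi y)%g) /\
       forall t, T t -> psi (iota t) = f t).

(* Sign action of v in {1,-1} on G; v is encoded by b : bool, true meaning -1. *)
Definition sgnact (G : zmodType) (b : bool) (g : G) : G := if b then - g else g.

Definition Wmul (G E : zmodType) (wedge : G -> G -> E) (x y : E * G * bool)
  : E * G * bool :=
  let: (l, g, v) := x in let: (l', g', v') := y in
  (l + l' + wedge g (sgnact v g'), g + sgnact v g', v (+) v').

(* M is 2-dependent: the elements of {g (x) g | g in M} are linearly dependent
   (over F_2) in G (x) G, i.e. some nonempty finite set of pairwise distinct
   such elements sums to 0. *)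
Definition two_dependent (G TT : zmodType) (tens : G -> G -> TT) (M : G -> Prop)
  : Prop :=
  exists s : seq G, [/\ s <> [::], (forall x, x \in s -> M x),
    uniq (map (fun x => tens x x) s) & \sum_(x <- s) tens x x = 0].

Definition two_independent (G TT : zmodType) (tens : G -> G -> TT) (M : G -> Prop)
  : Prop := ~ two_dependent tens M.

From HB Require Import structures.
From mathcomp Require Import all_boot all_algebra.
From mathcomp Require Import monoid.
From mathcomp Require Import boolp wochoice.

(* Since 2t - s = s in G, the generators of U are commuting involutions, so
   every element of U is a product of distinct generators t_1 ... t_n, with
   image (sum_{i<j} t_i /\ t_j, sum_i t_i, (-1)^n) in W.  When sum_i t_i = 0,
   the pair sum vanishes iff sum_i t_i (x) t_i does: one direction applies the
   map x /\ y |-> x (x) y + y (x) x, the other a bilinear beta with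
   beta x y + beta y x = x /\ y, built from a well-ordered basis of G.  As
   x (x) x determines x, a nontrivial kernel element is the same as a
   2-dependence among the nonzero t_i (padded with 0 to even length); such a
   word is nontrivial in U because a homomorphism U -> Z/2 counts the
   occurrences of one generator. *)

Set Implicit Arguments. Unset Strict Implicit. Unset Printing Implicit Defensive.
Import GRing.Theory.
Local Open Scope ring_scope.

Section WellOrder.
Variables (T : eqType) (R : rel T).
Hypothesis R_wo : well_order R.

Let R_chain : wo_chain R predT := withinW R_wo.

Lemma wo_refl : reflexive R.
Proof. by move=> x; apply: (wo_chain_reflexive R_chain). Qed.

Lemma wo_total : total R.
Proof. by move=> x y; apply: (wo_chainW R_chain). Qed.

Lemma wo_eq x y : R x y -> R y x -> x = y.
Proof. by move=> Rxy Ryx; apply: (wo_chain_antisymmetric R_chain); rewrite ?Rxy. Qed.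

Lemma wo_trans : transitive R.
Proof.
move=> y x z Rxy Ryz.
have [|m [[/[!inE] /or3P[] /eqP-> min_m] _]] := R_wo (A := mem [:: x; y; z]).
- by exists x; rewrite inE eqxx.
- by apply: min_m; rewrite !inE eqxx !orbT.
- by rewrite (@wo_eq x y) // min_m // inE eqxx.
- by rewrite -(@wo_eq y z) // min_m // !inE eqxx !orbT.
Qed.

Lemma wo_max_seq (s : seq T) :
  s != [::] -> exists2 m, m \in s & {in s, forall y, R y m}.
Proof.
elim: s => // x [_ _|y s IH _].
  by exists x => [|z]; rewrite ?mem_head // inE => /eqP->; apply: wo_refl.
have [m ms max_m] := IH isT.
have [Rxm|Rmx] := orP (wo_total x m).
  by exists m => [|z]; rewrite inE ?ms ?orbT // => /orP[/eqP->|/max_m].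
exists x => [|z]; rewrite ?mem_head // inE => /orP[/eqP->|/max_m Rzm].
  exact: wo_refl.
exact: wo_trans Rzm Rmx.
Qed.

End WellOrder.

Definition worder (T : eqType) : rel T := sval (well_ordering_principle T).

Lemma worderP (T : eqType) : well_order (@worder T).
Proof. exact: svalP (well_ordering_principle T). Qed.

Section SymDiff.
Variable T : eqType.
Implicit Types s : seq T.

Definition symdiff s1 s2 :=
  [seq x <- s1 | x \notin s2] ++ [seq x <- s2 | x \notin s1].

Lemma mem_symdiff s1 s2 x : (x \in symdiff s1 s2) = (x \in s1) (+) (x \in s2).
Proof. by rewrite mem_cat !mem_filter; case: (x \in s1); case: (x \in s2). Qed.

Lemma symdiff_uniq s1 s2 : uniq s1 -> uniq s2 -> uniq (symdiff s1 s2).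
Proof.
move=> u1 u2; rewrite cat_uniq !filter_uniq // andbT /=.
apply/hasPn => x; rewrite !mem_filter => /andP[x_n1 _].
by apply/negP => /andP[_ x1]; rewrite x1 in x_n1.
Qed.

Lemma big_symdiff (A : zmodType) (F : T -> A) s1 s2 :
  (forall x, F x + F x = 0) -> uniq s1 -> uniq s2 ->
  \sum_(x <- symdiff s1 s2) F x = \sum_(x <- s1) F x + \sum_(x <- s2) F x.
Proof.
move=> F2 u1 u2; rewrite big_cat !big_filter.
rewrite (bigID (mem s2) (r := s1) predT) (bigID (mem s1) (r := s2) predT) /=.
have -> : \sum_(x <- s2 | x \in s1) F x = \sum_(x <- s1 | x \in s2) F x.
  rewrite -[LHS]big_filter -[RHS]big_filter; apply/perm_big/uniq_perm.
  - exact: filter_uniq.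
  - exact: filter_uniq.
  by move=> x; rewrite !mem_filter andbC.
set c := \sum_(x <- s1 | x \in s2) F x.
have c2 : c + c = 0 by rewrite -big_split; apply: big1 => x _; apply: F2.
by rewrite addrCA !addrA c2 add0r addrC.
Qed.

End SymDiff.

Section AdditiveFun.
Variables A B : zmodType.

Lemma additive_fun0 (h : A -> B) : additive_fun h -> h 0 = 0.
Proof. by move=> hD; apply: (addrI (h 0)); rewrite -hD !addr0. Qed.

Lemma additive_fun_sum (h : A -> B) (I : Type) (r : seq I) (F : I -> A) :
  additive_fun h -> h (\sum_(i <- r) F i) = \sum_(i <- r) h (F i).
Proof. by move=> hD; apply: (big_morph h hD (additive_fun0 hD)). Qed.

Lemma biadditive_l (f : A -> A -> B) y : biadditive f -> additive_fun (f^~ y).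
Proof. by case=> fDl _ x x'; apply: fDl. Qed.

Lemma biadditive_r (f : A -> A -> B) x : biadditive f -> additive_fun (f x).
Proof. by case=> _ fDr; apply: fDr. Qed.

End AdditiveFun.

Section Char2.
Variable G : zmodType.
Hypothesis G2 : forall g : G, g + g = 0.

Lemma oppr_char2 (g : G) : - g = g.
Proof. by apply/eqP; rewrite eq_sym -addr_eq0 G2. Qed.

Lemma biadditive_char2 (A : zmodType) (f : G -> G -> A) x y :
  biadditive f -> f x y + f x y = 0.
Proof. by move=> fB; rewrite -(biadditive_l _ fB) G2 (additive_fun0 (biadditive_l _ fB)). Qed.

Lemma alternating_sym (A : zmodType) (f : G -> G -> A) x y :
  biadditive f -> (forall x, f x x = 0) -> f y x = f x y.
Proof.
move=> fB fA; have := fA (x + y).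
rewrite (biadditive_l _ fB) !(biadditive_r _ fB) !fA add0r addr0 => fxy.
by apply: (addIr (f y x)); rewrite biadditive_char2 // -fxy addrC.
Qed.

Definition span (X : G -> Prop) (g : G) :=
  exists2 s : seq G, {in s, forall x, X x} & g = \sum_(x <- s) x.

(* The basic elements form a basis of G over F_2. *)
Definition basic (b : G) : Prop := ~ span (fun h => worder h b /\ h != b) b.

Definition basis_rep (g : G) (s : seq G) :=
  [/\ uniq s, {in s, forall x, basic x} & g = \sum_(x <- s) x].

Lemma basis_repD x y s1 s2 :
  basis_rep x s1 -> basis_rep y s2 -> basis_rep (x + y) (symdiff s1 s2).
Proof.
move=> [u1 b1 ->] [u2 b2 ->]; split; first exact: symdiff_uniq.
  by move=> z; rewrite mem_symdiff; case: (boolP (z \in s1)) => [/b1|_ /b2].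
by rewrite (@big_symdiff _ _ id).
Qed.

(* A minimal element without a representation would have to be non-basic,
   i.e. a sum of smaller elements, all of which are represented. *)
Lemma basis_rep_exists g : exists s, basis_rep g s.
Proof.
apply: contrapT => no_rep.
have [|m [[/[!inE] /asboolPn m_bad min_m] _]] :=
  worderP (A := [pred g | ~~ `[< exists s, basis_rep g s >]]).
  by exists g; rewrite inE; apply/asboolPn.
apply: m_bad; case: (pselect (basic m)) => [m_basic|/contrapT[s small_s ->]].
  by exists [:: m]; split; rewrite ?big_seq1 // => x /[!inE] /eqP->.
have rep_s : {in s, forall x, exists s', basis_rep x s'}.
  move=> x xs; apply: contrapT => x_bad; have [mx x_neq] := small_s x xs.
  have xm := min_m x (introN (asboolP _) x_bad).
  by move: x_neq; rewrite (wo_eq (@worderP G) mx xm) eqxx.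
elim: s rep_s {small_s} => [_|x s IH rep_s]; first by exists [::]; split; rewrite ?big_nil.
have [s1 r1] := rep_s x (mem_head _ _).
have [s2 r2] := IH (fun y ys => rep_s y (mem_behead (s := x :: s) ys)).
by exists (symdiff s1 s2); rewrite big_cons; apply: basis_repD.
Qed.

(* The largest basic element of a vanishing sum is a sum of smaller ones. *)
Lemma basis_free s :
  uniq s -> {in s, forall x, basic x} -> \sum_(x <- s) x = 0 -> s = [::].
Proof.
move=> us bs s0; case: (altP (s =P [::])) => // /(wo_max_seq (@worderP G))[m ms max_m].
case: (bs m ms); exists (rem m s).
  move=> y yr; split; first by apply/max_m/(mem_rem yr).
  by apply: contraTneq yr => ->; rewrite mem_rem_uniqF.
by move/eqP: s0; rewrite (perm_big _ (perm_to_rem ms)) big_cons addr_eq0 oppr_char2 => /eqP.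
Qed.

Lemma basis_rep_unique g s1 s2 : basis_rep g s1 -> basis_rep g s2 -> s1 =i s2.
Proof.
move=> r1 r2; have [u b e] := basis_repD r1 r2.
have e0 : symdiff s1 s2 = [::] by apply: basis_free => //; rewrite -e G2.
by move=> x; have := mem_symdiff s1 s2 x; rewrite e0 in_nil; case: (x \in s1); case: (x \in s2).
Qed.

Definition supp (g : G) : seq G := projT1 (cid (basis_rep_exists g)).

Lemma supp_basis_rep g : basis_rep g (supp g).
Proof. exact: projT2 (cid (basis_rep_exists g)). Qed.

Lemma supp_uniq g : uniq (supp g).
Proof. by case: (supp_basis_rep g). Qed.

Lemma sum_supp g : \sum_(b <- supp g) b = g.
Proof. by case: (supp_basis_rep g). Qed.

Lemma big_suppD (A : zmodType) (F : G -> A) x y :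
  (forall b, F b + F b = 0) ->
  \sum_(b <- supp (x + y)) F b = \sum_(b <- supp x) F b + \sum_(b <- supp y) F b.
Proof.
move=> F2; rewrite -big_symdiff ?supp_uniq //; apply/perm_big/uniq_perm.
- exact: supp_uniq.
- by apply: symdiff_uniq; apply: supp_uniq.
exact: basis_rep_unique (supp_basis_rep _) (basis_repD (supp_basis_rep x) (supp_basis_rep y)).
Qed.

Definition supp_bilin (A : zmodType) (F : G -> G -> A) (x y : G) : A :=
  \sum_(a <- supp x) \sum_(b <- supp y) F a b.

Lemma supp_bilin_biadditive (A : zmodType) (F : G -> G -> A) :
  (forall a b, F a b + F a b = 0) -> biadditive (supp_bilin F).
Proof.
move=> F2; split=> x y z; rewrite /supp_bilin.
  by apply: big_suppD => a; rewrite -big_split; apply: big1 => b _; apply: F2.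
by rewrite -big_split; apply: eq_bigr => a _; apply: big_suppD.
Qed.

Lemma diag_retraction_exists :
  exists q : G -> G -> G, biadditive q /\ forall g, q g g = g.
Proof.
exists (supp_bilin (fun a b => if a == b then a else 0)); split.
  by apply: supp_bilin_biadditive => a b; case: eqP; rewrite ?G2 ?addr0.
move=> g; rewrite /supp_bilin -[RHS]sum_supp; apply: eq_big_seq => a a_g.
rewrite (bigD1_seq a) ?supp_uniq //= eqxx big1 ?addr0 // => b.
by rewrite eq_sym => /negbTE->.
Qed.

(* Order the basis by [worder] and keep only the pairs [a <= b]. *)
Lemma half_alternating_exists (E : zmodType) (w : G -> G -> E) :
  biadditive w -> (forall x, w x x = 0) ->
  exists beta : G -> G -> E, biadditive beta /\ forall x y, beta x y + beta y x = w x y.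
Proof.
move=> wB wA; exists (supp_bilin (fun a b => if worder a b then w a b else 0)); split.
  by apply: supp_bilin_biadditive => a b; case: ifP; rewrite ?biadditive_char2 ?addr0.
move=> x y; rewrite /supp_bilin [X in _ + X]exchange_big -big_split /=.
rewrite -[in RHS](sum_supp x) (additive_fun_sum _ _ (biadditive_l _ wB)).
apply: eq_bigr => a _; rewrite -big_split /=.
rewrite -[in RHS](sum_supp y) (additive_fun_sum _ _ (biadditive_r _ wB)).
apply: eq_bigr => b _; rewrite (alternating_sym _ _ wB wA).
case: (boolP (worder a b)) => ab; case: (boolP (worder b a)) => ba.
- by rewrite (wo_eq (@worderP G) ab ba) wA addr0.
- by rewrite addr0.
- by rewrite add0r.
- by move: (wo_total (@worderP G) a b); rewrite (negbTE ab) (negbTE ba).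
Qed.

End Char2.

Section WedgePairs.
Variables (G E : zmodType) (wedge : G -> G -> E).

(* [wedge_pairs [:: t_1; ...; t_n] = sum_{i<j} t_i /\ t_j]. *)
Fixpoint wedge_pairs (s : seq G) : E :=
  if s is t :: s' then wedge_pairs s' + \sum_(x <- s') wedge t x else 0.

Lemma biadditive_sum_sq (A : zmodType) (beta : G -> G -> A) (h : E -> A) :
  biadditive beta -> additive_fun h ->
  (forall x y, h (wedge x y) = beta x y + beta y x) ->
  forall s, beta (\sum_(x <- s) x) (\sum_(x <- s) x) =
            \sum_(x <- s) beta x x + h (wedge_pairs s).
Proof.
move=> bB hD hw; elim=> [|t s IH] /=.
  by rewrite !big_nil (additive_fun0 hD) (additive_fun0 (biadditive_l _ bB)) addr0.
rewrite !big_cons (biadditive_l _ bB) !(biadditive_r _ bB) IH hD (additive_fun_sum _ _ hD).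
rewrite (eq_bigr _ (fun x _ => hw t x)) big_split /=.
rewrite -(additive_fun_sum _ _ (biadditive_r _ bB)) -(additive_fun_sum _ _ (biadditive_l _ bB)).
by rewrite -!addrA; congr (_ + _); rewrite addrA addrC -addrA.
Qed.

End WedgePairs.

Section Relations.
Variables (G : zmodType) (T : G -> Prop) (U : groupType) (iota : G -> U).
Hypothesis G2 : forall g : G, g + g = 0.
Hypothesis iota_rel : U_relations T iota.

Lemma iota_invol t : T t -> (iota t * iota t = 1)%g.
Proof. exact: iota_rel.1. Qed.

(* In characteristic 2 the conjugation relation reads [t s t^-1 = s]. *)
Lemma iota_commute t s : T t -> T s -> commute (iota t) (iota s).
Proof.
move=> Tt Ts; have := iota_rel.2 t s Tt Ts.
rewrite mulr2n G2 sub0r oppr_char2 // => conj_ts.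
by rewrite /commute -[LHS](mulgVK (iota t)) conj_ts.
Qed.

Lemma prod_iota_rem S t : {in S, forall x, T x} -> t \in S ->
  (\prod_(x <- S) iota x = iota t * \prod_(x <- rem t S) iota x)%g.
Proof.
elim: S => [//|a S IH] TS /=.
have TS' : {in S, forall x, T x} by move=> x xS; apply: TS; rewrite inE xS orbT.
rewrite inE eq_sym big_cons; case: eqP => [->|/eqP ta] //= tS.
rewrite big_cons (IH TS' tS) !mulgA iota_commute //.
  exact/TS/mem_head.
exact: TS'.
Qed.

Lemma prod_iota_uniq w : {in w, forall x, T x} ->
  exists S, [/\ uniq S, {in S, forall x, T x} &
    (\prod_(t <- w) iota t = \prod_(t <- S) iota t)%g].
Proof.
elim: w => [_|t w IH Tw]; first by exists [::].
have [S [uS TS eS]] := IH (fun x xw => Tw x (mem_behead (s := t :: w) xw)).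
have Tt : T t by apply/Tw/mem_head.
rewrite big_cons eS; case: (boolP (t \in S)) => tS.
  exists (rem t S); split; first exact: rem_uniq.
    by move=> x /mem_rem /TS.
  by rewrite (prod_iota_rem TS tS) mulgA iota_invol // mul1g.
exists (t :: S); split; rewrite ?big_cons //=; first by rewrite tS.
by move=> x /[!inE] /orP[/eqP-> //|/TS].
Qed.

End Relations.

Section Presentation.
Variables (G : zmodType) (T : G -> Prop) (U : groupType) (iota : G -> U).
Hypothesis G2 : forall g : G, g + g = 0.
Hypothesis pres : presents T iota.

Lemma presents_uniq_word u : exists S, [/\ uniq S, {in S, forall x, T x} &
  u = (\prod_(t <- S) iota t)%g].
Proof.
have [w [Tw ->]] := pres.2.1 u.
have Tw' : {in map fst w, forall t, T t} by move=> t /mapP[p pw ->]; apply: Tw.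
have [S [uS TS eS]] := prod_iota_uniq G2 pres.1 Tw'.
exists S; split=> //; rewrite -eS big_map; apply: eq_big_seq => p pw.
by case: ifP => // _; apply/mulg1_eq/(iota_invol pres.1)/Tw.
Qed.

(* The parity of the number of occurrences of [t0] is read off by the
   homomorphism [U -> 'Z_2] sending [iota t0] to 1 and the other generators
   to 0. *)
Lemma prod_iota_eq1_count t0 w : {in w, forall x, T x} ->
  (\prod_(t <- w) iota t = 1)%g -> ~~ odd (count_mem t0 w).
Proof.
move=> Tw w1; pose chi t : 'Z_2 := (t == t0)%:R.
have chi_rel : U_relations T chi.
  split=> [t _|t s _ _]; first by rewrite /chi; case: (t == t0); apply/val_inj.
  rewrite mulr2n G2 sub0r oppr_char2 // /chi.
  by case: (t == t0); case: (s == t0); apply/val_inj.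
have [psi [psiM psi_iota]] := pres.2.2 _ chi chi_rel.
have psi1 : psi 1%g = 1%g by apply: (@mulIg _ (psi 1%g)); rewrite -psiM !mul1g.
have psi_prod : psi (\prod_(t <- w) iota t)%g = (count_mem t0 w)%:R.
  elim: w Tw {w1} => [|t w IH] Tw; first by rewrite big_nil psi1.
  rewrite big_cons psiM psi_iota ?IH ?natrD //; last exact/Tw/mem_head.
  by move=> x xw; apply/Tw/mem_behead.
move: psi_prod; rewrite w1 psi1 => /(congr1 val); rewrite /= Zp_nat /= modn2.
by case: odd.
Qed.

End Presentation.

Section HomToW.
Variables (G E : zmodType) (wedge : G -> G -> E).
Variables (T : G -> Prop) (U : groupType) (iota : G -> U) (phi : U -> E * G * bool).
Hypothesis G2 : forall g : G, g + g = 0.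
Hypothesis wedge_biadd : biadditive wedge.
Hypothesis wedge_alt : forall x, wedge x x = 0.
Hypothesis phiM : forall x y : U, phi (x * y)%g = Wmul wedge (phi x) (phi y).
Hypothesis phi_iota : forall t, T t -> phi (iota t) = (0, t, true).

Lemma phi1 : phi 1%g = (0, 0, false).
Proof.
have := phiM 1%g 1%g; rewrite mulg1; case: (phi 1%g) => [[l g] v] /= [el eg ev].
have v0 : v = false by rewrite ev addbb.
move: el eg; rewrite v0 /= => el eg.
have g0 : g = 0 by rewrite eg G2.
by move: el; rewrite g0 wedge_alt addr0 -{1}[l]addr0 => /addrI <-.
Qed.

Lemma phi_prod w : {in w, forall x, T x} ->
  phi (\prod_(t <- w) iota t)%g = (wedge_pairs wedge w, \sum_(t <- w) t, odd (size w)).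
Proof.
elim: w => [_|t w IH Tw]; first by rewrite !big_nil phi1.
rewrite big_cons phiM phi_iota ?IH /=; last exact/Tw/mem_head.
  by rewrite oppr_char2 // add0r big_cons (additive_fun_sum _ _ (biadditive_r _ wedge_biadd)).
by move=> x xw; apply/Tw/mem_behead.
Qed.

End HomToW.

Section Squares.
Variables (G TT E : zmodType) (tens : G -> G -> TT) (wedge : G -> G -> E).
Hypothesis G2 : forall g : G, g + g = 0.
Hypothesis tensP : is_tensor_square tens.
Hypothesis wedgeP : is_exterior_square wedge.

Lemma tens00 : tens 0 0 = 0.
Proof. exact: additive_fun0 (biadditive_l _ tensP.1). Qed.

Lemma tens_diag_retraction :
  exists h : TT -> G, additive_fun h /\ forall x, h (tens x x) = x.
Proof.
have [q [qB qdiag]] := diag_retraction_exists G2.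
have [h [hD [htens _]]] := tensP.2 G q qB.
by exists h; split=> // x; rewrite htens qdiag.
Qed.

Lemma tens_diag_inj : injective (fun x => tens x x).
Proof. by have [h [_ hdiag]] := tens_diag_retraction; move=> x y /(congr1 h); rewrite !hdiag. Qed.

(* [x (x) y + y (x) x] is alternating in characteristic 2, so it factors
   through the exterior square. *)
Lemma tens_sym_factor :
  exists h : E -> TT, additive_fun h /\ forall x y, h (wedge x y) = tens x y + tens y x.
Proof.
have [tDl tDr] := tensP.1.
have symB : biadditive (fun x y => tens x y + tens y x).
  by split=> x y z; rewrite ?tDl ?tDr addrACA.
have symA x : tens x x + tens x x = 0 by apply: biadditive_char2.
by have [h [hD [hw _]]] := wedgeP.2 _ _ symB symA; exists h.
Qed.

Lemma wedge_pairs_eq0 s : \sum_(x <- s) x = 0 ->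
  (wedge_pairs wedge s = 0 <-> \sum_(x <- s) tens x x = 0).
Proof.
move=> s0; split=> [pairs0|tens0].
  have [h [hD hw]] := tens_sym_factor.
  have := biadditive_sum_sq tensP.1 hD hw s.
  by rewrite s0 pairs0 (additive_fun0 hD) tens00 addr0.
have [beta [betaB beta_half]] := half_alternating_exists G2 wedgeP.1.1 wedgeP.1.2.
have [hb [hbD [hb_tens _]]] := tensP.2 _ _ betaB.
have := biadditive_sum_sq betaB (fun u v => erefl (u + v)) (fun x y => esym (beta_half x y)) s.
rewrite s0 (additive_fun0 (biadditive_l _ betaB)) -(eq_bigr _ (fun x _ => hb_tens x x)).
by rewrite -(additive_fun_sum _ _ hbD) tens0 (additive_fun0 hbD) add0r.
Qed.

Lemma two_independent_diag_sum (M : G -> Prop) s :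
  two_independent tens M -> uniq s -> {in s, forall x, M x} ->
  \sum_(x <- s) tens x x = 0 -> s = [::].
Proof.
move=> indep us Ms tens0; apply: contrapT => s_ne; apply: indep.
by exists s; split=> //; rewrite map_inj_uniq //; apply: tens_diag_inj.
Qed.

End Squares.

Section Injectivity.
Variables (G : zmodType) (T : G -> Prop) (TT : zmodType) (tens : G -> G -> TT).
Variables (E : zmodType) (wedge : G -> G -> E).
Variables (U : groupType) (iota : G -> U) (phi : U -> E * G * bool).
Hypothesis G2 : forall g : G, g + g = 0.
Hypothesis tensP : is_tensor_square tens.
Hypothesis wedgeP : is_exterior_square wedge.
Hypothesis pres : presents T iota.
Hypothesis phiM : forall x y : U, phi (x * y)%g = Wmul wedge (phi x) (phi y).
Hypothesis phi_iota : forall t, T t -> phi (iota t) = (0, t, true).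

Let phi1 := phi1 G2 wedgeP.1.2 phiM.
Let phi_prod := phi_prod G2 wedgeP.1.1 wedgeP.1.2 phiM phi_iota.

Lemma injective_of_two_independent :
  two_independent tens (fun g => T g /\ g != 0) -> injective phi.
Proof.
move=> indep x y phi_xy; apply: divg1_eq.
have [S [uS TS eS]] := presents_uniq_word G2 pres (x / y)%g.
have : phi (\prod_(t <- S) iota t)%g = phi 1%g by rewrite -eS phiM phi_xy -phiM mulgV.
rewrite phi_prod // phi1 => -[pairs0 sum0 even_S].
have nz_S : [seq g <- S | g != 0] = [::].
  apply: (two_independent_diag_sum G2 tensP indep (filter_uniq _ uS)).
    by move=> g; rewrite mem_filter => /andP[g_nz /TS].
  rewrite big_filter big_mkcond -[RHS]((wedge_pairs_eq0 G2 tensP wedgeP sum0).1 pairs0).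
  by apply: eq_bigr => g _; case: eqP => [->|]; rewrite ?(tens00 tensP).
have S_sub0 : {subset S <= [:: 0]}.
  move=> g gS; rewrite inE; apply: contraT => g_nz.
  by have := mem_filter (fun g => g != 0) g S; rewrite g_nz gS nz_S.
move: even_S (uniq_leq_size uS S_sub0); rewrite eS.
by case: S {uS TS eS pairs0 sum0 nz_S S_sub0} => [|? []]; rewrite ?big_nil.
Qed.

Lemma two_independent_of_injective :
  T 0 -> injective phi -> two_independent tens (fun g => T g /\ g != 0).
Proof.
move=> T0 phi_inj [s [s_ne Ms s_uniq tens0]].
have us : uniq s := map_uniq s_uniq.
have sum0 : \sum_(x <- s) x = 0.
  have [h [hD hdiag]] := tens_diag_retraction G2 tensP.
  by rewrite -(eq_bigr _ (fun x _ => hdiag x)) -(additive_fun_sum _ _ hD) tens0 (additive_fun0 hD).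
pose w := if odd (size s) then 0 :: s else s.
have Tw : {in w, forall x, T x}.
  move=> x; rewrite /w; case: ifP => _; last by case/Ms.
  by rewrite inE => /orP[/eqP-> //|/Ms[]].
have w_sum0 : \sum_(x <- w) x = 0 by rewrite /w; case: ifP; rewrite ?big_cons sum0 ?addr0.
have w_tens0 : \sum_(x <- w) tens x x = 0.
  by rewrite /w; case: ifP; rewrite ?big_cons tens0 ?(tens00 tensP) ?addr0.
have w1 : (\prod_(t <- w) iota t = 1)%g.
  apply: phi_inj; rewrite phi_prod // phi1 w_sum0.
  by rewrite ((wedge_pairs_eq0 G2 tensP wedgeP w_sum0).2 w_tens0) /w; case: ifP => /= ->.
have [t0 t0s] : exists t0, t0 \in s by case: (s) s_ne => // a ? _; exists a; apply: mem_head.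
have := prod_iota_eq1_count G2 pres t0 Tw w1.
have [_ t0_nz] := Ms t0 t0s.
rewrite /w; case: ifP => _ /=; rewrite (count_uniq_mem t0 us) t0s //.
by rewrite eq_sym (negbTE t0_nz).
Qed.

End Injectivity.

Unset Implicit Arguments.

Theorem theorem4p4 (G : zmodType) (T : G -> Prop)
  (TT : zmodType) (tens : G -> G -> TT)
  (E : zmodType) (wedge : G -> G -> E)
  (U : groupType) (iota : G -> U) (phi : U -> E * G * bool) :
  (forall g : G, g + g = 0) ->
  generates T -> T 0 ->
  is_tensor_square tens ->
  is_exterior_square wedge ->
  presents T iota ->
  (forall x y : U, phi (x * y)%g = Wmul wedge (phi x) (phi y)) ->
  (forall t, T t -> phi (iota t) = (0, t, true)) ->
  (injective phi <-> two_independent tens (fun g => T g /\ g != 0)).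
Proof.
move=> G2 _ T0 tensP wedgeP pres phiM phi_iota; split.
  exact: two_independent_of_injective G2 tensP wedgeP pres phiM phi_iota T0.
exact: injective_of_two_independent G2 tensP wedgeP pres phiM phi_iota.
Qed.
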